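(* Let $n>1$ and let $(G,\sigma)$ be a vertex-colored graph with $V=V(G)$. Let $G+x$ be obtained by adding a new vertex $x\notin V$ adjacent to all vertices of $V$, and let $\sigma'$ be the coloring of $V\cup\{x\}$ with $\sigma'(v)=\sigma(v)$ for $v\in V$ and $\sigma'(x)\neq\sigma(v)$ for all $v\in V$. Then $(G,\sigma)$ is an $(n-1)$-RBMG if and only if $(G+x,\sigma')$ is an $n$-RBMG.
   Context: All graphs are finite, simple and undirected. A vertex coloring is a surjective map $\sigma:V\to S$; properly colored means adjacent vertices get distinct colors. A phylogenetic tree $T$ on $L$ is a rooted tree with leaf set $L$ whose inner vertices other than the root have degree at least three; $u\preceq_T v$ means $v$ lies on the root-to-$u$ path; $\mathrm{lca}_T$ is last common ancestor. For surjective $\sigma:L\to S$, $y$ is a best match of $x$ if $\sigma(x)\neq\sigma(y)$ and $\mathrm{lca}_T(x,y)\preceq_T\mathrm{lca}_T(x,y')$ for all $y'$ with $\sigma(y')=\sigma(y)$; $G(T,\sigma)$ is the graph on $L$ whose edges are the reciprocal best match pairs. A properly colored $(G,\sigma)$ is an RBMG if $G(T,\sigma)=(G,\sigma)$ for some leaf-colored phylogenetic tree $(T,\sigma)$; it is an $n$-RBMG if moreover exactly $n$ colors are used. *)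

From HB Require Import structures.
From mathcomp Require Import all_boot.
Set Implicit Arguments. Unset Strict Implicit. Unset Printing Implicit Defensive.

(* A rooted tree is given by a finite vertex type, a root, and a parent map
   (par root = root) along which every vertex reaches the root. *)

Definition children (V : finType) (par : V -> V) (v : V) : {set V} :=
  [set u | (par u == v) && (u != v)].

Record phylo_tree (L : finType) := PhyloTree {
  vert : finType;
  root : vert;
  par : vert -> vert;
  leaf : L -> vert;
  par_root : par root = root;
  reach_root : forall v, exists k, iter k par v = root;
  leaf_inj : injective leaf;
  leaves_exact : forall v, children par v = set0 <-> exists l, leaf l = v;
  inner_deg : forall v, v != root -> children par v != set0 ->
                        2 <= #|children par v|
}.

(* u ⪯_T v : v lies on the path from u to the root *)
Definition anc (L : finType) (T : phylo_tree L) (u v : vert T) : Prop :=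
  exists k, iter k (@par L T) u = v.

Definition is_lca (L : finType) (T : phylo_tree L) (a b z : vert T) : Prop :=
  [/\ anc a z, anc b z & forall w, anc a w -> anc b w -> anc z w].

Definition best_match (L S : finType) (T : phylo_tree L) (sigma : L -> S)
    (x y : L) : Prop :=
  sigma x <> sigma y /\
  forall y', sigma y' = sigma y ->
    forall z z', is_lca (@leaf L T x) (@leaf L T y) z ->
                 is_lca (@leaf L T x) (@leaf L T y') z' -> anc z z'.

Definition properly_colored (L S : finType) (G : rel L) (sigma : L -> S) :=
  forall x y, G x y -> sigma x <> sigma y.

Definition is_RBMG (L S : finType) (G : rel L) (sigma : L -> S) : Prop :=
  properly_colored G sigma /\
  exists T : phylo_tree L,
    forall x y, G x y <-> (best_match T sigma x y /\ best_match T sigma y x).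

Definition is_nRBMG (n : nat) (L S : finType) (G : rel L) (sigma : L -> S) :=
  is_RBMG G sigma /\ #|[set sigma v | v in L]| = n.

(* G + x : the new vertex x is [None], adjacent to every old vertex *)
Definition add_vertex (L : finType) (G : rel L) : rel (option L) :=
  fun a b => match a, b with
             | Some u, Some v => G u v
             | None, Some _ => true
             | Some _, None => true
             | None, None => false
             end.

(* sigma' : old colors kept, x gets the new color None *)
Definition add_color (L S : finType) (sigma : L -> S) : option L -> option S :=
  fun a => match a with Some v => Some (sigma v) | None => None end.

From Pilot Require (* Re-import so that the tree field [root] shadows fingraph's [root]. *)
Import Defs.
From HB Require Import structures.
From mathcomp Require Import all_boot.
From Stdlib Require Import Classical.
Import Defs.
Set Implicit Arguments. Unset Strict Implicit. Unset Printing Implicit Defensive.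

(* Both directions transfer a tree through a "leaf embedding" of a tree A on L
   into a tree B on option L: a vertex map preserving and reflecting ancestry,
   sending leaf l to leaf Some l, whose image contains the lca of any two old
   leaves.  Best matches between old leaves only compare such lcas, and the new
   leaf None has a color of its own, so embeddings preserve G(T, sigma) on the
   old leaves (embedding_recip).
   - (=>) Graft the new leaf x directly below the root (or use a star when T is
     a single vertex): then lca(x, y) is the root for every y, so x forms a
     reciprocal best match with everything (universal_leaf_recip).
   - (<=) Prune x from a tree realizing G + x, suppressing its parent if that
     leaves it with a single child; the pruned tree embeds into the original. *)

Lemma least_witness (P : nat -> Prop) :
  (exists n, P n) -> exists n, P n /\ forall m, m < n -> ~ P m.
Proof.
move=> [n Pn]; elim/ltn_ind: n Pn => n IH Pn.
have [[m ltmn Pm] | none] := classic (exists2 m, m < n & P m); first exact: IH ltmn Pm.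
by exists n; split => // m ltmn Pm; apply: none; exists m.
Qed.

Section Skip.
Variables (V : Type) (f g : V -> V) (K : V -> bool).
Hypothesis gK : forall u, K u -> K (g u).
Hypothesis g_skips : forall u, K u -> exists m, [/\ 0 < m, iter m f u = g u &
  forall j, 0 < j < m -> ~~ K (iter j f u)].

Lemma iter_skip u v : K u -> K v ->
  (exists k, iter k g u = v) <-> (exists m, iter m f u = v).
Proof.
move=> Ku Kv; split.
  move=> [k <-]; elim: k => [|k [m fm]]; first by exists 0.
  have Kk : K (iter k g u) by elim: (k) => //= k' /gK.
  have [m' [_ fm' _]] := g_skips Kk.
  by exists (m' + m); rewrite iterD fm fm' iterS.
move=> [m fm]; elim/ltn_ind: m u Ku fm => m IH u Ku fm.
have [m' [m'_gt0 fm' skip]] := g_skips Ku.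
case: (posnP m) => [m0 | m_gt0]; first by exists 0; rewrite -fm m0.
case: (ltnP m m') => [ltmm' | lem'm].
  by have := skip m; rewrite m_gt0 ltmm' fm Kv => /(_ isT).
have lt_m : m - m' < m by rewrite -subn_gt0 subKn.
have fgm : iter (m - m') f (g u) = v by rewrite -fm' -iterD subnK.
have [k gk] := IH _ lt_m (g u) (gK Ku) fgm.
by exists k.+1; rewrite iterSr.
Qed.
End Skip.

Section TreeOrder.
Variables (L : finType) (T : phylo_tree L).
Notation pr := (@par L T).
Implicit Types u v w z : vert T.

Lemma iter_par_root k : iter k pr (root T) = root T.
Proof. by elim: k => //= k ->; rewrite par_root. Qed.

Lemma par_cycle_root m v : 0 < m -> iter m pr v = v -> v = root T.
Proof.
move=> m_gt0 cyc; have [k vk] := reach_root v.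
have cyc_k : iter (k * m) pr v = v.
  by elim: (k) => // j IH; rewrite mulSn iterD IH cyc.
by rewrite -cyc_k -(subnK (leq_pmulr k m_gt0)) iterD vk iter_par_root.
Qed.

Lemma par_fix v : pr v = v -> v = root T.
Proof. exact: (@par_cycle_root 1). Qed.

Lemma par_swap u v : pr u = v -> pr v = u -> u = v.
Proof.
move=> uv vu; have u_root : u = root T by apply: (@par_cycle_root 2) => //=; rewrite uv.
by rewrite -uv u_root par_root.
Qed.

Lemma anc_refl v : anc v v. Proof. by exists 0. Qed.

Lemma anc_par v : anc v (pr v). Proof. by exists 1. Qed.

Lemma anc_antisym u v : anc u v -> anc v u -> u = v.
Proof.
move=> [k uv] [m vu]; case: (posnP (m + k)) => [/eqP | mk_gt0].
  by rewrite addn_eq0 => /andP [_ /eqP k0]; rewrite -uv k0.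
have u_root : u = root T by apply: (par_cycle_root mk_gt0); rewrite iterD uv vu.
by rewrite -uv u_root iter_par_root.
Qed.

Lemma lca_unique u v z z' : is_lca u v z -> is_lca u v z' -> z = z'.
Proof. by move=> [uz vz zmin] [uz' vz' zmin']; apply: anc_antisym; auto. Qed.

Lemma lca_self v : is_lca v v v.
Proof. by split => //; exact: anc_refl. Qed.

(* The lca of u and v is the first ancestor of u that is an ancestor of v. *)
Lemma lca_exists u v : exists z, is_lca u v z.
Proof.
have [k [vk kmin]] : exists k, anc v (iter k pr u) /\
    forall j, j < k -> ~ anc v (iter j pr u).
  apply: least_witness; have [k uk] := reach_root u.
  by exists k; rewrite uk; exact: reach_root.
exists (iter k pr u); split => //; first by exists k.
move=> w [j <-] vw; case: (ltnP j k) => [ltjk | lekj]; first by case: (kmin j).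
by exists (j - k); rewrite -iterD subnK.
Qed.

Lemma anc_child u v : anc u v -> u != v -> exists2 c, c \in children pr v & anc u c.
Proof.
move=> uv neq_uv; have [[|k] [uk kmin]] := least_witness uv.
  by rewrite -uk eqxx in neq_uv.
exists (iter k pr u); last by exists k.
rewrite inE -iterS uk eqxx /=; apply/eqP => ukv.
by apply: (kmin k).
Qed.

Lemma leaf_children l : children pr (leaf T l) = set0.
Proof. by apply/leaves_exact; exists l. Qed.

Lemma anc_childless u w : children pr w = set0 -> anc u w -> u = w.
Proof.
move=> no_child uw; apply/eqP/negPn/negP => neq_uw.
by have [c] := anc_child uw neq_uw; rewrite no_child inE.
Qed.

Lemma childless_root_trivial v : children pr (root T) = set0 -> v = root T.
Proof. by move=> no_child; apply: anc_childless no_child (reach_root v). Qed.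

End TreeOrder.

Definition recip_bm (L S : finType) (T : phylo_tree L) (sigma : L -> S) (x y : L) :=
  best_match T sigma x y /\ best_match T sigma y x.

Definition leaf_embedding (L : finType) (A : phylo_tree L) (B : phylo_tree (option L))
    (e : vert A -> vert B) :=
  [/\ forall u v, anc u v <-> anc (e u) (e v),
      forall l, e (leaf A l) = leaf B (Some l) &
      forall a b, exists z, is_lca (leaf B (Some a)) (leaf B (Some b)) (e z)].

(* Best matches among the old leaves only depend on ancestry between lcas, so
   they are preserved by leaf embeddings (the new leaf None carries a new
   color, hence never competes with an old leaf). *)
Section Embedding.
Variables (L S : finType) (sigma : L -> S).
Variables (A : phylo_tree L) (B : phylo_tree (option L)) (e : vert A -> vert B).
Hypothesis emb : leaf_embedding e.

Lemma embedding_lca a b z :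
  is_lca (leaf A a) (leaf A b) z <-> is_lca (leaf B (Some a)) (leaf B (Some b)) (e z).
Proof.
have [e_anc e_leaf e_lca] := emb.
have pull z' : is_lca (leaf B (Some a)) (leaf B (Some b)) (e z') ->
    is_lca (leaf A a) (leaf A b) z'.
  move=> [az bz zmin]; split; rewrite ?e_anc ?e_leaf //.
  by move=> w aw bw; apply/e_anc/zmin; rewrite -e_leaf -e_anc.
split=> [lca_z | /pull //]; have [z' lca_z'] := e_lca a b.
by rewrite (lca_unique lca_z (pull _ lca_z')).
Qed.

Lemma embedding_best_match x y :
  best_match A sigma x y <-> best_match B (add_color sigma) (Some x) (Some y).
Proof.
have [e_anc _ e_lca] := emb.
split=> [[neq_col bm] | [neq_col bm]].
  split=> [[/neq_col] //|[y'|] //= [col_y'] z z' lca_z lca_z'].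
  have [w lca_w] := e_lca x y; have [w' lca_w'] := e_lca x y'.
  rewrite (lca_unique lca_z lca_w) (lca_unique lca_z' lca_w') -e_anc.
  by apply: (bm y' col_y'); apply/embedding_lca.
split=> [col_xy|y' col_y' z z' lca_z lca_z']; first by apply: neq_col; rewrite /= col_xy.
by apply/e_anc/(bm (Some y') (congr1 Some col_y')); apply/embedding_lca.
Qed.

Lemma embedding_recip x y :
  recip_bm A sigma x y <-> recip_bm B (add_color sigma) (Some x) (Some y).
Proof. by rewrite /recip_bm !embedding_best_match. Qed.
End Embedding.

Lemma universal_leaf_recip (L S : finType) (B : phylo_tree L) (sigma : L -> S) x0 :
  (forall y, y != x0 -> sigma y <> sigma x0) ->
  (forall y, y != x0 -> is_lca (leaf B x0) (leaf B y) (root B)) ->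
  forall y, y != x0 -> recip_bm B sigma x0 y.
Proof.
move=> own_col lca_root y y_x0; split; split.
- by move=> col_eq; apply: (own_col _ y_x0).
- move=> y' col_y' z z' lca_z lca_z'.
  have y'_x0 : y' != x0.
    by apply/eqP => y'x0; apply: (own_col _ y_x0); rewrite -col_y' y'x0.
  by rewrite (lca_unique lca_z (lca_root _ y_x0)) (lca_unique lca_z' (lca_root _ y'_x0));
    exact: anc_refl.
- exact: own_col.
- move=> y' col_y' z z' lca_z lca_z'.
  have y'x0 : y' = x0 by apply/eqP/negPn/negP => /own_col; apply.
  by rewrite y'x0 in lca_z'; rewrite (lca_unique lca_z lca_z'); exact: anc_refl.
Qed.

Section Graft.
Variables (L : finType) (T : phylo_tree L).
Hypothesis root_branching : children (@par L T) (root T) != set0.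
Notation pr := (@par L T).

Definition graft_par (v : option (vert T)) : option (vert T) :=
  if v is Some w then Some (pr w) else Some (root T).

Definition graft_leaf (l : option L) : option (vert T) :=
  if l is Some l' then Some (leaf T l') else None.

Lemma iter_graft_par k w : iter k graft_par (Some w) = Some (iter k pr w).
Proof. by elim: k => //= k ->. Qed.

Lemma graft_par_root : graft_par (Some (root T)) = Some (root T).
Proof. by rewrite /= par_root. Qed.

Lemma graft_reach v : exists k, iter k graft_par v = Some (root T).
Proof.
case: v => [w|]; last by exists 1.
by have [k wk] := reach_root w; exists k; rewrite iter_graft_par wk.
Qed.

Lemma graft_leaf_inj : injective graft_leaf.
Proof. by case=> [a|] [b|] //= [/leaf_inj ->]. Qed.

Lemma graft_child_Some u w :
  (Some u \in children graft_par (Some w)) = (u \in children pr w).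
Proof. by rewrite !inE. Qed.

Lemma graft_child_None w : (None \in children graft_par (Some w)) = (w == root T).
Proof. by rewrite !inE /= andbT eq_sym. Qed.

Lemma graft_children_None : children graft_par None = set0.
Proof. by apply/setP => -[u|]; rewrite !inE. Qed.

Lemma graft_leaves v : children graft_par v = set0 <-> exists l, graft_leaf l = v.
Proof.
case: v => [w|]; last by split=> _; [exists None | exact: graft_children_None].
split=> [no_child | [[l|] //= [<-]]].
  have /leaves_exact [l <-] : children pr w = set0.
    by apply/setP => u; rewrite -graft_child_Some no_child !inE.
  by exists (Some l).
have leaf_root : leaf T l != root T.
  by apply: contraNneq root_branching => <-; rewrite leaf_children.
apply/setP => -[u|]; rewrite ?graft_child_Some ?graft_child_None ?leaf_children !inE //.
exact/negbTE.
Qed.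

Lemma graft_deg v : v != Some (root T) -> children graft_par v != set0 ->
  2 <= #|children graft_par v|.
Proof.
case: v => [w|]; last by rewrite graft_children_None eqxx.
move=> w_root some_child; have w_root' : w != root T by apply: contraNneq w_root => ->.
have sub : Some @: children pr w \subset children graft_par (Some w).
  by apply/subsetP => _ /imsetP [u u_child ->]; rewrite graft_child_Some.
apply: leq_trans (subset_leq_card sub); rewrite card_imset; last exact: Some_inj.
apply: (inner_deg w_root'); apply: contraNneq some_child => no_child.
apply/eqP/setP => -[u|]; rewrite ?graft_child_Some ?graft_child_None ?no_child !inE //.
exact/negbTE.
Qed.

Definition graftT : phylo_tree (option L) :=
  PhyloTree graft_par_root graft_reach graft_leaf_inj graft_leaves graft_deg.

Lemma graft_embedding : leaf_embedding (B := graftT) Some.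
Proof.
split=> // [u v | a b].
  by split=> -[k uv]; exists k; move: uv; rewrite /= iter_graft_par; [move=> -> | case].
have [z lca_z] := lca_exists (leaf graftT (Some a)) (leaf graftT (Some b)).
have [[k]] := lca_z; rewrite /= iter_graft_par => az _ _.
by exists (iter k pr (leaf T a)); rewrite az.
Qed.

Lemma graft_lca_root l :
  is_lca (leaf graftT None) (leaf graftT (Some l)) (root graftT).
Proof.
split; [exact: anc_par | exact: reach_root |].
move=> w [[|k] xw] [j lw]; move: xw lw => /=.
  by move=> <-; rewrite iter_graft_par.
by rewrite -iterS iterSr /= iter_graft_par iter_par_root => <- _; exact: anc_refl.
Qed.
End Graft.

Section Star.
Variables (M : finType) (m0 : M).

Definition star_par (v : option M) : option M := None.

Lemma star_par_root : star_par None = None. Proof. by []. Qed.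

Lemma star_reach v : exists k, iter k star_par v = None. Proof. by exists 1. Qed.

Lemma star_leaves v : children star_par v = set0 <-> exists m, Some m = v.
Proof.
case: v => [m|]; split; [by exists m | | | by case].
- by move=> _; apply/setP => u; rewrite !inE.
- by move/setP/(_ (Some m0)); rewrite !inE.
Qed.

Lemma star_deg v : v != None -> children star_par v != set0 ->
  2 <= #|children star_par v|.
Proof.
case: v => // m _; suff -> : children star_par (Some m) = set0 by rewrite eqxx.
by apply/setP => u; rewrite !inE.
Qed.

Definition starT : phylo_tree M :=
  PhyloTree star_par_root star_reach (@Some_inj _) star_leaves star_deg.

Lemma star_lca m m' : m != m' -> is_lca (leaf starT m) (leaf starT m') (root starT).
Proof.
move=> neq_mm'; split; [exact: anc_par | exact: anc_par |].
move=> [u|] [k mu] [j m'u]; last exact: anc_refl.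
have below_leaf i x : iter i star_par (Some x) = Some u -> x = u by case: i => [[]|].
by case/eqP: neq_mm'; rewrite (below_leaf _ _ mu) (below_leaf _ _ m'u).
Qed.
End Star.

(* Every tree on L extends to a tree on option L in which the new leaf None has
   the root as lca with every old leaf: graft None below the root, or, when T
   is a single vertex (so L is a singleton), take the star tree. *)
Lemma extend_tree (L : finType) (T : phylo_tree L) :
  exists (B : phylo_tree (option L)) (e : vert T -> vert B),
    leaf_embedding e /\ forall l, is_lca (leaf B None) (leaf B (Some l)) (root B).
Proof.
have [root_branching | /negPn/eqP no_child] :=
  boolP (children (@par L T) (root T) != set0).
  by exists (graftT root_branching), Some; split; [exact: graft_embedding | exact: graft_lca_root].
have trivial v : v = root T := childless_root_trivial v no_child.
have [l0 _] := (leaves_exact (root T)).1 no_child.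
have single l : l = l0.
  by apply: (@leaf_inj _ T); rewrite (trivial (leaf T l)) (trivial (leaf T l0)).
exists (starT None), (fun=> leaf (starT None) (Some l0)); split; last first.
  by move=> l; apply: star_lca.
split=> [u v | l | a b].
- by rewrite (trivial u) (trivial v); split=> _; exact: anc_refl.
- by rewrite (single l).
- by exists (root T); rewrite (single a) (single b); exact: lca_self.
Qed.

(* Let p be the
   parent of x.  If p is an inner vertex with exactly the two children x and s,
   then p is suppressed as well and s is reattached to the parent of p;
   otherwise only x is removed. *)
Section Prune.
Variables (L : finType) (T : phylo_tree (option L)) (l0 : L).
Notation pr := (@par _ T).

Definition xleaf := leaf T None.
Definition xpar := pr xleaf.
Definition suppress := (xpar != root T) && (#|children pr xpar| == 2).
Definition xsib := odflt xleaf [pick w in children pr xpar | w != xleaf].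

Definition kept w := (w != xleaf) && ~~ (suppress && (w == xpar)).
Definition prune_step w := if suppress && (pr w == xpar) then pr xpar else pr w.
Definition redirect w := if suppress && (w == xpar) then xsib else w.

Lemma leaf_ne_xleaf l : leaf T (Some l) != xleaf.
Proof. by apply/eqP => /leaf_inj. Qed.

Lemma anc_xleaf u : anc u xleaf -> u = xleaf.
Proof. exact/anc_childless/leaf_children. Qed.

Lemma par_ne_xleaf w : w != xleaf -> pr w != xleaf.
Proof.
move=> w_x; apply/eqP => par_w.
by have := leaf_children T None; move/setP/(_ w); rewrite !inE par_w eqxx w_x.
Qed.

(* T has at least the two leaves x and l0, so its root is not a leaf. *)
Lemma root_branching : children pr (root T) != set0.
Proof.
apply/eqP => no_child; have := leaf_ne_xleaf l0.
by rewrite /xleaf (childless_root_trivial (leaf T None) no_child)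
  (childless_root_trivial (leaf T (Some l0)) no_child) eqxx.
Qed.

Lemma xleaf_ne_root : xleaf != root T.
Proof. by apply: contraNneq root_branching => <-; rewrite leaf_children. Qed.

Lemma xpar_ne_xleaf : xpar != xleaf.
Proof. by apply: contraNneq xleaf_ne_root => /par_fix ->. Qed.

Lemma xleaf_child : xleaf \in children pr xpar.
Proof. by rewrite inE eqxx eq_sym xpar_ne_xleaf. Qed.

Lemma leaf_ne_xpar l : leaf T (Some l) != xpar.
Proof. by apply: contraTneq xleaf_child => <-; rewrite leaf_children inE. Qed.

(* x has a sibling: p is either the root (above the leaf l0) or of degree >= 3. *)
Lemma xpar_other_child : exists2 c, c \in children pr xpar & c != xleaf.
Proof.
have [root_xpar | xpar_root] := eqVneq xpar (root T).
  have l0_root : leaf T (Some l0) != root T by rewrite -root_xpar leaf_ne_xpar.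
  have [c c_child l0c] := anc_child (reach_root (leaf T (Some l0))) l0_root.
  exists c; first by rewrite root_xpar.
  by apply: contraNneq (leaf_ne_xleaf l0) => cx; apply/eqP/anc_xleaf; rewrite -cx.
have xpar_branching : children pr xpar != set0 by apply/set0Pn; exists xleaf; exact: xleaf_child.
have := inner_deg xpar_root xpar_branching.
rewrite (cardsD1 xleaf) xleaf_child ltnS card_gt0 => /set0Pn [c].
by rewrite in_setD1 => /andP [c_x c_child]; exists c.
Qed.

Lemma xsib_spec : suppress -> [/\ xsib \in children pr xpar, xsib != xleaf &
  forall w, w \in children pr xpar -> w = xleaf \/ w = xsib].
Proof.
case/andP => _ /eqP card2.
have /cards1P [c only_c] : #|children pr xpar :\ xleaf| == 1.
  by move: card2; rewrite (cardsD1 xleaf) xleaf_child add1n => -[->].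
have other w : (w \in children pr xpar) && (w != xleaf) = (w == c).
  by rewrite -[w == c]in_set1 -only_c in_setD1 andbC.
have xsib_c : xsib = c.
  rewrite /xsib; case: pickP => [w | /(_ c)]; rewrite other ?eqxx //=.
  by move/eqP.
move: (other c); rewrite eqxx -xsib_c => /andP [s_child s_x]; split=> // w w_child.
have [-> | w_x] := eqVneq w xleaf; [by left | right].
by apply/eqP; rewrite xsib_c -other w_child.
Qed.

Lemma xsib_par : suppress -> pr xsib = xpar.
Proof. by case/xsib_spec; rewrite inE => /andP [/eqP]. Qed.

Lemma xsib_ne_xpar : suppress -> xsib != xpar.
Proof. by case/xsib_spec; rewrite inE => /andP []. Qed.

Lemma xpar_nonfixed : suppress -> pr xpar != xpar.
Proof. by case/andP => xpar_root _; apply: contra xpar_root => /eqP/par_fix ->. Qed.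

Lemma xsib_ne_grandpar : suppress -> xsib != pr xpar.
Proof.
move=> sup; apply: contra (xpar_nonfixed sup) => /eqP s_gp.
by rewrite -s_gp (par_swap (xsib_par sup) (esym s_gp)).
Qed.

Lemma below_xpar l : suppress ->
  anc (leaf T (Some l)) xpar -> anc (leaf T (Some l)) xsib.
Proof.
move=> sup lx; have [c c_child lc] := anc_child lx (leaf_ne_xpar l).
have [_ _ /(_ c c_child) [cx | <-] //] := xsib_spec sup.
by rewrite cx in lc; move: (leaf_ne_xleaf l); rewrite (anc_xleaf lc) eqxx.
Qed.

Lemma kept_root : kept (root T).
Proof.
rewrite /kept eq_sym xleaf_ne_root; apply/negP => /andP [/andP [xpar_root _] /eqP root_xpar].
by rewrite root_xpar eqxx in xpar_root.
Qed.

Lemma kept_leaf l : kept (leaf T (Some l)).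
Proof. by rewrite /kept leaf_ne_xleaf (negbTE (leaf_ne_xpar l)) andbF. Qed.

Lemma kept_xsib : suppress -> kept xsib.
Proof.
by move=> sup; case: (xsib_spec sup) => _ s_x _; rewrite /kept s_x (negbTE (xsib_ne_xpar sup)) andbF.
Qed.

Lemma kept_prune_step w : kept w -> kept (prune_step w).
Proof.
rewrite /kept /prune_step => /andP [w_x w_np]; case: ifP => [/andP [sup _] | ->].
  by rewrite par_ne_xleaf ?xpar_ne_xleaf // sup (negbTE (xpar_nonfixed sup)).
by rewrite par_ne_xleaf.
Qed.

(* The new parent of a kept vertex is its first kept proper ancestor in T. *)
Lemma prune_step_skips u : kept u -> exists m, [/\ 0 < m, iter m pr u = prune_step u &
  forall j, 0 < j < m -> ~~ kept (iter j pr u)].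
Proof.
rewrite /prune_step => _; case: ifP => [/andP [sup /eqP pu] | _]; last first.
  by exists 1; split=> // -[|[|j]].
exists 2; split=> //=; first by rewrite pu.
by case=> [|[|j]] //= _; rewrite /kept pu sup eqxx andbF.
Qed.

Definition pvert := {w : vert T | kept w}.
Definition prune_par (u : pvert) : pvert :=
  exist _ (prune_step (val u)) (kept_prune_step (valP u)).
Definition prune_root : pvert := exist _ (root T) kept_root.
Definition prune_leaf (l : L) : pvert := exist _ (leaf T (Some l)) (kept_leaf l).

Lemma val_iter_prune_par k u : val (iter k prune_par u) = iter k prune_step (val u).
Proof. by elim: k => //= k ->. Qed.

Lemma prune_iter u v :
  (exists k, iter k prune_par u = v) <-> (exists m, iter m pr (val u) = val v).
Proof.
rewrite -(iter_skip kept_prune_step prune_step_skips (valP u) (valP v)).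
split=> -[k uv]; exists k.
  by rewrite -val_iter_prune_par uv.
by apply: val_inj; rewrite val_iter_prune_par.
Qed.

Lemma prune_par_root : prune_par prune_root = prune_root.
Proof.
apply: val_inj; rewrite /= /prune_step par_root.
by case/andP: kept_root => _ /negbTE ->.
Qed.

Lemma prune_reach u : exists k, iter k prune_par u = prune_root.
Proof. exact/prune_iter/reach_root. Qed.

Lemma prune_leaf_inj : injective prune_leaf.
Proof. by move=> a b /(congr1 val) /leaf_inj [->]. Qed.

Lemma mem_prune_children u v :
  (u \in children prune_par v) = (prune_step (val u) == val v) && (val u != val v).
Proof. by rewrite inE -!val_eqE. Qed.

Lemma prune_children v :
  [set val u | u in children prune_par v] = redirect @: (children pr (val v) :\ xleaf).
Proof.
apply/eqP; rewrite eqEsubset; apply/andP; split; apply/subsetP.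
  move=> _ /imsetP [u + ->]; rewrite mem_prune_children => /andP [/eqP step_u uv].
  case/andP: (valP u) => u_x u_np; move: step_u; rewrite /prune_step.
  case: ifP => [/andP [sup /eqP u_xpar] gp_v | _ par_u]; apply/imsetP; last first.
    by exists (val u); rewrite ?in_setD1 ?inE ?u_x ?par_u ?eqxx // /redirect (negbTE u_np).
  exists xpar; first by rewrite in_setD1 xpar_ne_xleaf inE -gp_v eqxx eq_sym xpar_nonfixed.
  have u_child : val u \in children pr xpar.
    by rewrite inE u_xpar eqxx; apply: contra u_np => ->; rewrite sup.
  have [_ _ /(_ _ u_child) [ux | ->]] := xsib_spec sup; last by rewrite /redirect sup eqxx.
  by rewrite ux eqxx in u_x.
move=> _ /imsetP [w + ->]; rewrite in_setD1 inE => /andP [w_x /andP [/eqP par_w wv]].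
rewrite /redirect; case: ifP => [/andP [sup /eqP w_xpar] | w_np].
  apply/imsetP; exists (exist _ xsib (kept_xsib sup)) => //.
  rewrite mem_prune_children /= /prune_step sup xsib_par // eqxx -par_w w_xpar eqxx /=.
  exact: xsib_ne_grandpar.
have w_kept : kept w by rewrite /kept w_x w_np.
apply/imsetP; exists (exist _ w w_kept) => //; rewrite mem_prune_children /= /prune_step.
case: ifP => [/andP [sup /eqP pw] | _]; last by rewrite par_w eqxx wv.
by case/andP: (valP v) => _; rewrite -par_w pw sup eqxx.
Qed.

Lemma card_prune_children v :
  #|children prune_par v| = #|children pr (val v) :\ xleaf|.
Proof.
rewrite -(card_imset _ val_inj) prune_children card_in_imset //.
have xsib_out : suppress -> xpar \in children pr (val v) -> xsib \notin children pr (val v).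
  move=> sup; rewrite !inE => /andP [/eqP gp _]; apply/negP => /andP [/eqP ps _].
  by move: (xpar_nonfixed sup); rewrite gp -ps xsib_par ?eqxx.
move=> w1 w2; rewrite !in_setD1 => /andP [_ w1_child] /andP [_ w2_child].
rewrite /redirect; case: ifP => [/andP [sup /eqP w1x] | _];
  case: ifP => [/andP [sup' /eqP w2x] | _] //; first by rewrite w1x w2x.
  by move=> sw2; have := xsib_out sup; rewrite -w1x sw2 w1_child w2_child => /(_ isT).
by move=> w1s; have := xsib_out sup'; rewrite -w2x -w1s w1_child w2_child => /(_ isT).
Qed.

Lemma prune_leaves v : children prune_par v = set0 <-> exists l, prune_leaf l = v.
Proof.
have empty_iff : children prune_par v = set0 <-> children pr (val v) :\ xleaf = set0.
  split=> /eqP; rewrite -cards_eq0 => empty; apply/eqP; rewrite -cards_eq0.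
    by rewrite -card_prune_children.
  by rewrite card_prune_children.
rewrite empty_iff; split=> [no_child | [l <-]]; last by rewrite /= leaf_children set0D.
have [x_child | x_nonchild] := boolP (xleaf \in children pr (val v)).
  have vx : val v = xpar by move: x_child; rewrite inE => /andP [/eqP <-].
  have [c c_child c_x] := xpar_other_child.
  by move/setP/(_ c): no_child; rewrite in_setD1 c_x vx c_child inE.
have /leaves_exact [[l|] lv] : children pr (val v) = set0.
- apply/setP => w; move/setP/(_ w): no_child; rewrite in_setD1 in_set0.
  by have [-> | //] := eqVneq w xleaf; rewrite (negbTE x_nonchild).
- by exists l; apply: val_inj.
- by case/andP: (valP v); rewrite -lv eqxx.
Qed.

Lemma prune_deg v : v != prune_root -> children prune_par v != set0 ->
  2 <= #|children prune_par v|.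
Proof.
rewrite -!card_gt0 card_prune_children => v_root.
have v_root' : val v != root T by apply: contraNneq v_root => vr; apply/eqP/val_inj.
set C := children pr (val v) => some_child.
have C_ne : C != set0 by apply: contraTneq some_child => ->; rewrite set0D cards0.
have := inner_deg v_root' C_ne; rewrite (cardsD1 xleaf C).
have [x_child | _] := boolP (xleaf \in C); last by rewrite add0n.
have vx : val v = xpar by move: x_child; rewrite inE => /andP [/eqP <-].
have not_sup : ~~ suppress by case/andP: (valP v) => _; rewrite vx eqxx andbT.
have : #|C| != 2 by move: not_sup; rewrite /suppress -vx v_root'.
by rewrite (cardsD1 xleaf C) x_child; case: #|C :\ xleaf| => [|[|k]].
Qed.

(* The lca of two old leaves is never x, and never a suppressed p (it would then
   lie weakly below s). *)
Lemma prune_lca a b : exists z : pvert,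
  is_lca (leaf T (Some a)) (leaf T (Some b)) (val z).
Proof.
have [z lca_z] := lca_exists (leaf T (Some a)) (leaf T (Some b)).
suff z_kept : kept z by exists (exist _ z z_kept).
have [az bz zmin] := lca_z; apply/andP; split.
  by apply: contraNneq (leaf_ne_xleaf a) => zx; apply/eqP/anc_xleaf; rewrite -zx.
apply/negP => /andP [sup /eqP zx]; rewrite zx in az bz zmin.
have xs := zmin _ (below_xpar sup az) (below_xpar sup bz).
have sx : anc xsib xpar by rewrite -(xsib_par sup); exact: anc_par.
by move: (xsib_ne_xpar sup); rewrite (anc_antisym xs sx) eqxx.
Qed.

Definition pruneT : phylo_tree L :=
  PhyloTree prune_par_root prune_reach prune_leaf_inj prune_leaves prune_deg.

Lemma prune_embedding : leaf_embedding (A := pruneT) (B := T) val.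
Proof. by split=> // [u v | a b]; [exact: prune_iter | exact: prune_lca]. Qed.
End Prune.

Lemma card_add_color (L S : finType) (sigma : L -> S) :
  #|[set add_color sigma v | v in (option L : finType)]| = #|[set sigma v | v in L]|.+1.
Proof.
have image_split : [set add_color sigma v | v in (option L : finType)] =
    None |: (Some @: [set sigma v | v in L]).
  apply/setP => -[s|]; rewrite in_setU1 /=; last by apply/imsetP; exists None.
  rewrite (mem_imset _ _ (@Some_inj _)).
  by apply/imsetP/imsetP => [[[v|] // _ [->]] | [v _ ->]]; [exists v | exists (Some v)].
rewrite image_split cardsU1 card_imset; last exact: Some_inj.
suff -> : None \notin Some @: [set sigma v | v in L] by [].
by apply/imsetP => -[].
Qed.

Lemma add_vertex_recip (L S : finType) (G : rel L) (sigma : L -> S)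
    (B : phylo_tree (option L)) :
  (forall a b, G a b <-> recip_bm B (add_color sigma) (Some a) (Some b)) ->
  (forall l, is_lca (leaf B None) (leaf B (Some l)) (root B)) ->
  forall u v, add_vertex G u v <-> recip_bm B (add_color sigma) u v.
Proof.
move=> old_edges x_lca_root.
have x_edge l : recip_bm B (add_color sigma) None (Some l).
  by apply: universal_leaf_recip => // -[l'|] // _; exact: x_lca_root.
case=> [a|] [b|] /=; first exact: old_edges.
- by split=> // _; have [] := x_edge a; split.
- by split=> // _; exact: x_edge.
- by split=> // -[[]].
Qed.

Theorem mainTheorem4 (n : nat) (L S : finType) (G : rel L) (sigma : L -> S) :
  1 < n -> symmetric G -> irreflexive G ->
  (forall s : S, exists v : L, sigma v = s) ->
  (is_nRBMG n.-1 G sigma <-> is_nRBMG n (add_vertex G) (add_color sigma)).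
Proof.
move=> n_gt1 _ _ _; have card_colors := card_add_color sigma.
split=> [[[proper [T edges]] ncol] | [[proper [T edges]] ncol]].
  split; last by rewrite card_colors ncol prednK // ltnW.
  split; first by case=> [a|] [b|] //= ab [col_ab]; exact: proper ab col_ab.
  have [B [e [emb x_lca_root]]] := extend_tree T.
  exists B; apply: add_vertex_recip x_lca_root => a b.
  by rewrite -(embedding_recip _ emb); exact: edges.
have ncol' : #|[set sigma v | v in L]| = n.-1 by rewrite -ncol card_colors.
have [l0 _] : exists l0 : L, True.
  have : 0 < #|[set sigma v | v in L]| by rewrite ncol' -ltnS prednK // ltnW.
  by rewrite card_gt0 => /set0Pn [_ /imsetP [l0 _ _]]; exists l0.
split=> //; split.
  by move=> a b ab col_ab; apply: (proper (Some a) (Some b) ab); rewrite /= col_ab.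
exists (pruneT T l0) => a b.
exact: iff_trans (edges (Some a) (Some b))
  (iff_sym (embedding_recip _ (prune_embedding T l0) a b)).
Qed.
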